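(* Let $n,p,k\ge 1$, let $X\in\mathbb{R}^{n\times p}$, $\omega\in\mathbb{R}^n$, and let $\theta_1^*,\dots,\theta_k^*\in\mathbb{R}^p$, with observation $y = X\sum_{i=1}^k\theta_i^* + \omega$. Let $R_1,\dots,R_k$ be norms on $\mathbb{R}^p$ and let $(\hat\theta_1,\dots,\hat\theta_k)$ be a solution of $$\min_{\theta_1,\dots,\theta_k}\Big\|y - X\sum_{i=1}^k\theta_i\Big\|_2^2\quad\text{s.t.}\quad R_i(\theta_i)\le R_i(\theta_i^* ),\ i=1,\dots,k.$$ Set $\Delta_i=\hat\theta_i-\theta_i^*$. Assume the restricted eigenvalue condition holds with constant $\kappa>0$: for all $\Delta_i'\in\mathcal{C}_i$, $i=1,\dots,k$, $$\frac{1}{\sqrt n}\Big\|X\sum_{i=1}^k\Delta_i'\Big\|_2\ \ge\ \kappa\sum_{i=1}^k\|\Delta_i'\|_2 .$$ Let $\gamma>0$. If $\kappa^2>\gamma$, then $\sum_{i=1}^k\|\Delta_i\|_2\le 2 s_n(\gamma)$.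
   Context: For each $i$, the error cone is $\mathcal{C}_i=\operatorname{cone}\{\Delta\in\mathbb{R}^p: R_i(\theta_i^*+\Delta)\le R_i(\theta_i^* )\}$, where $\operatorname{cone}(E)$ denotes the smallest closed cone containing $E$. Let $\mathcal{H}=\{\sum_{i=1}^k\Delta_i' : \Delta_i'\in\mathcal{C}_i,\ \sum_{i=1}^k\|\Delta_i'\|_2=1\}$ and, for $s>0$, $s\mathcal{H}=\{su:u\in\mathcal{H}\}$. The noise–design interaction is $$s_n(\gamma)=\inf\Big\{s>0:\ \sup_{u\in s\mathcal{H}}\frac{1}{\sqrt n}\,\omega^T X u\le \gamma s^2\sqrt n\Big\}.$$ *)

From HB Require Import structures.
From mathcomp Require Import all_boot all_order all_algebra.
From mathcomp Require Import all_classical all_reals all_analysis.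
Set Implicit Arguments. Unset Strict Implicit. Unset Printing Implicit Defensive.
Import Order.TTheory GRing.Theory Num.Theory.
Import numFieldNormedType.Exports.
Local Open Scope classical_set_scope.
Local Open Scope ring_scope.

Section Defs.
Variable R : realType.

Definition l2norm (m : nat) (v : 'cV[R]_m) : R :=
  Num.sqrt (\sum_(j < m) (v j 0) ^+ 2).

Definition is_norm (p : nat) (N : 'cV[R]_p -> R) : Prop :=
  [/\ (forall x, N x = 0 -> x = 0),
      (forall (a : R) x, N (a *: x) = `|a| * N x) &
      (forall x y, N (x + y) <= N x + N y)].

Definition is_cone (p : nat) (C : set 'cV[R]_p) : Prop :=
  forall (t : R) x, 0 <= t -> C x -> C (t *: x).

Definition cone_hull (p : nat) (E : set 'cV[R]_p) : set 'cV[R]_p :=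
  \bigcap_(C in [set C : set 'cV[R]_p | [/\ closed C, is_cone C & E `<=` C]]) C.

Definition error_cone (p : nat) (Ri : 'cV[R]_p -> R) (thi : 'cV[R]_p)
  : set 'cV[R]_p :=
  cone_hull [set D | Ri (thi + D) <= Ri thi].

Definition Hset (p k : nat) (C : 'I_k -> set 'cV[R]_p) : set 'cV[R]_p :=
  [set u | exists D : 'I_k -> 'cV[R]_p,
     [/\ forall i, C i (D i), \sum_(i < k) l2norm (D i) = 1 &
         u = \sum_(i < k) D i]].

Definition scaled_set (p : nat) (s : R) (H : set 'cV[R]_p) : set 'cV[R]_p :=
  [set s *: u | u in H].

(* noise-design interaction s_n(gamma), as an extended real (inf of empty = +oo) *)
Definition s_n (n p k : nat) (X : 'M[R]_(n, p)) (w : 'cV[R]_n)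
  (C : 'I_k -> set 'cV[R]_p) (gamma : R) : \bar R :=
  ereal_inf [set s%:E | s in
    [set s : R | 0 < s /\
       (forall u, scaled_set s (Hset C) u ->
          (Num.sqrt n%:R)^-1 * (w^T *m X *m u) 0 0
            <= gamma * s ^+ 2 * Num.sqrt n%:R)]].

End Defs.

(* Write Δ = Σ Δ_i, t = Σ ‖Δ_i‖ and v = X Δ. Since θ* is feasible, optimality of θ̂
   gives the basic inequality ‖v‖² ≤ 2 ⟨ω, v⟩, while the restricted eigenvalue
   condition gives κ t √n ≤ ‖v‖. For any admissible s in the definition of s_n(γ),
   the point (s / t) Δ lies in s H (each error cone is a cone), so ⟨ω, v⟩ ≤ γ s t n.
   Together, κ² t² n ≤ 2 γ s t n, whence t ≤ 2 (γ / κ²) s ≤ 2 s; taking the infimum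
   over s gives t ≤ 2 s_n(γ). *)
From HB Require Import structures.
From mathcomp Require Import all_boot all_order all_algebra.
From mathcomp Require Import all_classical all_reals all_analysis.
From mathcomp Require Import ring lra.
Set Implicit Arguments. Unset Strict Implicit. Unset Printing Implicit Defensive.
Import Order.TTheory GRing.Theory Num.Theory.
Import numFieldNormedType.Exports.
Local Open Scope classical_set_scope.
Local Open Scope ring_scope.

Section Euclidean_norm.
Variables (R : realType) (m : nat).
Implicit Types v w : 'cV[R]_m.

Lemma l2norm_sqr v : l2norm v ^+ 2 = (v^T *m v) 0 0.
Proof.
rewrite /l2norm sqr_sqrtr ?sumr_ge0 // => [|j _]; last exact: sqr_ge0.
by rewrite mxE; apply: eq_bigr => j _; rewrite mxE.
Qed.

Lemma l2normZ (a : R) v : l2norm (a *: v) = `|a| * l2norm v.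
Proof.
rewrite /l2norm; under eq_bigr => j _ do rewrite mxE exprMn.
by rewrite -mulr_sumr sqrtrM ?sqr_ge0 // sqrtr_sqr.
Qed.

Lemma l2normB_sqr w v :
  l2norm (w - v) ^+ 2 = l2norm w ^+ 2 - 2 * (w^T *m v) 0 0 + l2norm v ^+ 2.
Proof.
have vw : (v^T *m w) 0 0 = (w^T *m v) 0 0.
  by rewrite !mxE; apply: eq_bigr => j _; rewrite !mxE mulrC.
rewrite !l2norm_sqr mulmxBr linearB /= !mulmxBl.
by rewrite !mxE in vw *; rewrite vw; ring.
Qed.

End Euclidean_norm.

Section Cone_hull.
Variables (R : realType) (p : nat) (E : set 'cV[R]_p).

Lemma sub_cone_hull : E `<=` cone_hull E.
Proof. by move=> x Ex C [_ _ EC]; exact: EC. Qed.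

Lemma cone_hull_is_cone : is_cone (cone_hull E).
Proof. by move=> t x t0 Ex C [Ccl Ccone EC]; exact/Ccone/(Ex C). Qed.

End Cone_hull.

Lemma error_cone_feasible (R : realType) (p : nat) (N : 'cV[R]_p -> R) th th' :
  N th' <= N th -> error_cone N th (th' - th).
Proof. by move=> le_th; apply: sub_cone_hull; rewrite /= addrC subrK. Qed.

Lemma scaled_Hset_normalized (R : realType) (p k : nat)
    (C : 'I_k -> set 'cV[R]_p) (D : 'I_k -> 'cV[R]_p) (s : R) :
  (forall i, is_cone (C i)) -> (forall i, C i (D i)) ->
  0 < \sum_(i < k) l2norm (D i) ->
  scaled_set s (Hset C) ((s / \sum_(i < k) l2norm (D i)) *: \sum_(i < k) D i).
Proof.
set t := \sum_(i < k) _ => Ccone CD t_gt0.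
exists (t^-1 *: \sum_(i < k) D i); last by rewrite scalerA.
exists (fun i => t^-1 *: D i); split.
- by move=> i; apply: Ccone => //; rewrite invr_ge0 ltW.
- under eq_bigr => i _ do rewrite l2normZ.
  by rewrite -mulr_sumr gtr0_norm ?invr_gt0 // mulVf // gt_eqF.
- by rewrite scaler_sumr.
Qed.

Lemma basic_inequality (R : realType) (n p : nat) (X : 'M[R]_(n, p))
    (w y : 'cV[R]_n) (th th' : 'cV[R]_p) :
  y = X *m th + w ->
  l2norm (y - X *m th') ^+ 2 <= l2norm (y - X *m th) ^+ 2 ->
  l2norm (X *m (th' - th)) ^+ 2 <= 2 * (w^T *m (X *m (th' - th))) 0 0.
Proof.
move=> ->; rewrite [X *m th + w - X *m th]addrAC subrr add0r.
have -> : X *m th + w - X *m th' = w - X *m (th' - th).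
  by rewrite mulmxBr opprB addrAC addrC.
by rewrite l2normB_sqr; lra.
Qed.

Lemma le_scale_ereal_inf (R : realType) (A : set R) (c t : R) :
  0 < c -> (forall s, A s -> t <= c * s) ->
  (t%:E <= c%:E * ereal_inf [set s%:E | s in A])%E.
Proof.
move=> c_gt0 tA; rewrite -lee_pdivrMl //.
apply: le_ereal_inf_tmp => _ [s As <-].
by rewrite -EFinM lee_fin ler_pdivrMl //; exact: tA.
Qed.

(* [a], [b], [N] stand for ‖X Δ‖, ⟨ω, X Δ⟩ and √n. *)
Lemma error_le_twice_radius (R : realType) (a b t s kappa gamma N : R) :
  0 < N -> 0 < t -> 0 < s -> gamma < kappa ^+ 2 ->
  0 <= kappa -> kappa * t <= N^-1 * a -> a ^+ 2 <= 2 * b ->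
  N^-1 * (s / t * b) <= gamma * s ^+ 2 * N ->
  t <= 2 * s.
Proof.
move=> N_gt0 t_gt0 s_gt0 gamma_lt kappa_ge0 hRE hbasic.
rewrite ler_pdivrMl // [s / t * b]mulrAC ler_pdivrMr // => hnoise.
rewrite ler_pdivlMl // in hRE.
have RE_sqr : (N * (kappa * t)) ^+ 2 <= a ^+ 2.
  have RE_ge0 : 0 <= N * (kappa * t) by rewrite !mulr_ge0 // ltW.
  by rewrite lerXn2r ?nnegrE ?(le_trans RE_ge0).
have : kappa ^+ 2 * t * (s * t * N ^+ 2) <= 2 * gamma * s * (s * t * N ^+ 2).
  have -> : kappa ^+ 2 * t * (s * t * N ^+ 2) = s * (N * (kappa * t)) ^+ 2 by ring.
  have -> : 2 * gamma * s * (s * t * N ^+ 2) = 2 * (N * (gamma * s ^+ 2 * N) * t).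
    by ring.
  by apply: le_trans (ler_wpM2l (ltW s_gt0) (le_trans RE_sqr hbasic)) _; lra.
by rewrite ler_pM2r ?mulr_gt0 ?exprn_gt0 // => ?; nra.
Qed.

Theorem theorem1 (R : realType) (n p k : nat)
  (hn : (0 < n)%N) (hp : (0 < p)%N) (hk : (0 < k)%N)
  (X : 'M[R]_(n, p)) (w : 'cV[R]_n) (thstar : 'I_k -> 'cV[R]_p)
  (y : 'cV[R]_n)
  (hy : y = X *m (\sum_(i < k) thstar i) + w)
  (Rn : 'I_k -> 'cV[R]_p -> R) (hRn : forall i, is_norm (Rn i))
  (thhat : 'I_k -> 'cV[R]_p)
  (hfeas : forall i, Rn i (thhat i) <= Rn i (thstar i))
  (hopt : forall th : 'I_k -> 'cV[R]_p,
     (forall i, Rn i (th i) <= Rn i (thstar i)) ->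
     l2norm (y - X *m (\sum_(i < k) thhat i)) ^+ 2
       <= l2norm (y - X *m (\sum_(i < k) th i)) ^+ 2)
  (kappa : R) (hkappa : 0 < kappa)
  (hRE : forall D : 'I_k -> 'cV[R]_p,
     (forall i, error_cone (Rn i) (thstar i) (D i)) ->
     (Num.sqrt n%:R)^-1 * l2norm (X *m (\sum_(i < k) D i))
       >= kappa * \sum_(i < k) l2norm (D i))
  (gamma : R) (hgamma : 0 < gamma) (hkg : kappa ^+ 2 > gamma) :
  ((\sum_(i < k) l2norm (thhat i - thstar i))%:E
     <= 2%:E * s_n X w (fun i => error_cone (Rn i) (thstar i)) gamma)%E.
Proof.
set D := fun i => thhat i - thstar i.
have D_in_cone i : error_cone (Rn i) (thstar i) (D i) by exact: error_cone_feasible.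
have basic := basic_inequality hy (hopt thstar (fun i => lexx _)).
rewrite -sumrB -/D in basic.
apply: le_scale_ereal_inf => // s [s_gt0 s_adm].
have [t_gt0|t_le0] := ltrP 0 (\sum_(i < k) l2norm (D i)); last first.
  by rewrite (le_trans t_le0) // mulr_ge0 // ltW.
apply: (error_le_twice_radius _ t_gt0 s_gt0 hkg (ltW hkappa) (hRE D D_in_cone) basic).
  by rewrite sqrtr_gt0 ltr0n.
have error_cone_cone i : is_cone (error_cone (Rn i) (thstar i)) by exact: cone_hull_is_cone.
have := s_adm _ (scaled_Hset_normalized s error_cone_cone D_in_cone t_gt0).
by rewrite -mulmxA -!scalemxAr mxE.
Qed.
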